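(* Let $\psi$ and $\tilde\psi$ be twice differentiable, increasing, nonvanishing functions on $(0,\infty)$ (not necessarily complete Bernstein functions). For $\lambda>0$ define \[\vartheta_\lambda=\frac1\pi\int_0^1\frac{1}{1-\zeta^2}\log\frac{\psi_\lambda(\lambda^2/\zeta^2)}{\psi_\lambda(\lambda^2\zeta^2)}\,d\zeta,\] and define $\tilde\vartheta_\lambda$ in the same way using $\tilde\psi_\lambda$; assume these integrals converge and are finite. If $-\psi''(\xi)/\psi'(\xi)\le-\tilde\psi''(\xi)/\tilde\psi'(\xi)$ for all $\xi>0$, then $\vartheta_\lambda\le\tilde\vartheta_\lambda$ for all $\lambda>0$.
   Context: For $\lambda,\xi>0$, $\xi\ne\lambda^2$, $\psi_\lambda(\xi)=\dfrac{1-\xi/\lambda^2}{1-\psi(\xi)/\psi(\lambda^2)}$, extended continuously by $\psi_\lambda(\lambda^2)=\psi(\lambda^2)/(\lambda^2\psi'(\lambda^2))$; $\tilde\psi_\lambda$ is defined analogously from $\tilde\psi$. *)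

From Stdlib Require Import Reals.
From Coquelicot Require Import Coquelicot.
Open Scope R_scope.

Definition psil (psi : R -> R) (lam xi : R) : R :=
  if Req_EM_T xi (lam ^ 2) then psi (lam ^ 2) / (lam ^ 2 * Derive psi (lam ^ 2))
  else (1 - xi / lam ^ 2) / (1 - psi xi / psi (lam ^ 2)).

Definition theta_integrand (psi : R -> R) (lam z : R) : R :=
  / (1 - z ^ 2) * ln (psil psi lam (lam ^ 2 / z ^ 2) / psil psi lam (lam ^ 2 * z ^ 2)).

Definition vartheta (psi : R -> R) (lam : R) : R :=
  / PI * RInt_gen (theta_integrand psi lam) (at_right 0) (at_left 1).

Definition twice_diff_pos (psi : R -> R) : Prop :=
  forall x, 0 < x -> ex_derive psi x /\ ex_derive (Derive psi) x.

From Stdlib Require Import Reals Lra.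
From Coquelicot Require Import Coquelicot.
Open Scope R_scope.

(* The hypothesis says that [psit' / psi'] is nonincreasing.  Comparing
   [psit - k psi], with [k = psit'(lam^2) / psi'(lam^2)], on both sides of
   [lam^2] shows that the chord ratio
   [(psi(lam^2) - psi(lam^2 z^2)) / (psi(lam^2 / z^2) - psi(lam^2))]
   is at most the corresponding ratio for [psit].  Up to a factor independent of
   [psi], this ratio is the argument of the logarithm in the integrand of
   [vartheta], so the integrands compare pointwise on (0,1), and so do the
   integrals. *)

Lemma le_of_is_derive_nonneg (f df : R -> R) x y : x <= y ->
  (forall t, x <= t <= y -> is_derive f t (df t)) ->
  (forall t, x <= t <= y -> 0 <= df t) -> f x <= f y.
Proof.
  intros Hxy Hd Hpos.
  destruct (MVT_gen f x y df) as [c [Hc Hmvt]];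
    rewrite ?Rmin_left, ?Rmax_right in * by lra.
  - intros t Ht. apply Hd; lra.
  - intros t Ht. apply continuity_pt_filterlim, (ex_derive_continuous f).
    exists (df t). apply Hd; lra.
  - assert (0 <= df c * (y - x)) by (apply Rmult_le_pos; [apply Hpos|]; lra).
    lra.
Qed.

Section ChordRatio.

Variables f g : R -> R.
Hypothesis f_derivable : forall x, 0 < x -> ex_derive f x.
Hypothesis g_derivable : forall x, 0 < x -> ex_derive g x.
Hypothesis f'_pos : forall x, 0 < x -> 0 < Derive f x.

Let ratio x := Derive g x / Derive f x.

Hypothesis ratio_nonincreasing :
  forall x y, 0 < x -> x <= y -> ratio y <= ratio x.

Lemma f_nondecreasing x y : 0 < x -> x <= y -> f x <= f y.
Proof.
  intros Hx Hxy. apply (le_of_is_derive_nonneg f (Derive f)); [lra| |].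
  - intros t Ht. apply Derive_correct, f_derivable; lra.
  - intros t Ht. left. apply f'_pos; lra.
Qed.

Lemma is_derive_g_minus_scal_f k t : 0 < t ->
  is_derive (fun x => g x - k * f x) t (Derive f t * (ratio t - k)).
Proof.
  intros Ht.
  replace (Derive f t * (ratio t - k)) with (Derive g t - k * Derive f t)
    by (unfold ratio; field; apply Rgt_not_eq, f'_pos, Ht).
  apply (is_derive_minus g (fun x => k * f x)).
  - apply Derive_correct, g_derivable, Ht.
  - apply is_derive_scal, Derive_correct, f_derivable, Ht.
Qed.

Lemma chord_ratio_le b c a : 0 < b -> b <= c -> c <= a ->
  (f c - f b) * (g a - g c) <= (g c - g b) * (f a - f c).
Proof.
  intros Hb Hbc Hca.
  set (k := ratio c).
  assert (left_chord : k * (f c - f b) <= g c - g b).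
  { enough (g b - k * f b <= g c - k * f c) by lra.
    apply (le_of_is_derive_nonneg (fun x => g x - k * f x)
             (fun t => Derive f t * (ratio t - k)));
      [lra | intros t Ht; apply is_derive_g_minus_scal_f; lra |].
    intros t Ht. apply Rmult_le_pos; [left; apply f'_pos; lra |].
    enough (k <= ratio t) by lra. apply ratio_nonincreasing; lra. }
  assert (right_chord : g a - g c <= k * (f a - f c)).
  { enough (- (g c - k * f c) <= - (g a - k * f a)) by lra.
    apply (le_of_is_derive_nonneg (fun x => - (g x - k * f x))
             (fun t => - (Derive f t * (ratio t - k))));
      [lra | intros t Ht; apply (is_derive_opp (fun x => g x - k * f x));
             apply is_derive_g_minus_scal_f; lra |].
    intros t Ht. enough (Derive f t * (ratio t - k) <= 0) by lra.
    apply Rmult_le_0_l; [left; apply f'_pos; lra |].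
    enough (ratio t <= k) by lra. apply ratio_nonincreasing; lra. }
  assert (0 <= f c - f b) by (enough (f b <= f c) by lra; apply f_nondecreasing; lra).
  assert (0 <= f a - f c) by (enough (f c <= f a) by lra; apply f_nondecreasing; lra).
  apply Rle_trans with ((f c - f b) * (k * (f a - f c))).
  - apply Rmult_le_compat_l; lra.
  - replace ((f c - f b) * (k * (f a - f c))) with (k * (f c - f b) * (f a - f c))
      by ring.
    apply Rmult_le_compat_r; lra.
Qed.

End ChordRatio.

Lemma derive_ratio_nonincreasing (f g : R -> R) :
  twice_diff_pos f -> twice_diff_pos g ->
  (forall x, 0 < x -> 0 < Derive f x) ->
  (forall x, 0 < x -> 0 < Derive g x) ->
  (forall x, 0 < x ->
     - Derive (Derive f) x / Derive f x <= - Derive (Derive g) x / Derive g x) ->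
  forall x y, 0 < x -> x <= y ->
  Derive g y / Derive f y <= Derive g x / Derive f x.
Proof.
  intros Df Dg f'_pos g'_pos log_derive_le x y Hx Hxy.
  set (f' := Derive f). set (g' := Derive g).
  enough (- (g' x / f' x) <= - (g' y / f' y)) by lra.
  apply (le_of_is_derive_nonneg (fun t => - (g' t / f' t))
    (fun t => g' t / f' t * (Derive f' t / f' t - Derive g' t / g' t))); [lra | |].
  - intros t Ht. assert (f't_pos : 0 < f' t) by (apply f'_pos; lra).
    assert (g't_pos : 0 < g' t) by (apply g'_pos; lra).
    replace (g' t / f' t * (Derive f' t / f' t - Derive g' t / g' t)) with
      (- ((Derive g' t * f' t - g' t * Derive f' t) / f' t ^ 2)) by (field; lra).
    apply (is_derive_opp (fun t => g' t / f' t)), is_derive_div.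
    + apply Derive_correct, Dg; lra.
    + apply Derive_correct, Df; lra.
    + lra.
  - intros t Ht. apply Rmult_le_pos.
    + left. apply Rdiv_lt_0_compat; [apply g'_pos | apply f'_pos]; lra.
    + enough (- Derive f' t / f' t <= - Derive g' t / g' t) by lra.
      apply log_derive_le; lra.
Qed.

Lemma scaled_points_ordered L z : 0 < L -> 0 < z < 1 ->
  0 < L * z ^ 2 < L /\ L < L / z ^ 2.
Proof.
  intros HL Hz. assert (z2 : 0 < z ^ 2 < 1) by nra.
  split; [nra |].
  apply (Rmult_lt_reg_r (z ^ 2)); [lra |].
  unfold Rdiv. rewrite Rmult_assoc, Rinv_l by lra. nra.
Qed.

Lemma psil_quotient psi lam z : 0 < lam -> 0 < z < 1 ->
  (forall x y, 0 < x -> x < y -> psi x < psi y) ->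
  (forall x, 0 < x -> psi x <> 0) ->
  psil psi lam (lam ^ 2 / z ^ 2) / psil psi lam (lam ^ 2 * z ^ 2) =
  (lam ^ 2 / z ^ 2 - lam ^ 2) / (lam ^ 2 - lam ^ 2 * z ^ 2) *
  ((psi (lam ^ 2) - psi (lam ^ 2 * z ^ 2)) / (psi (lam ^ 2 / z ^ 2) - psi (lam ^ 2))).
Proof.
  intros Hlam Hz psi_incr psi_nz.
  set (L := lam ^ 2).
  assert (HL : 0 < L) by (unfold L; nra).
  destruct (scaled_points_ordered L z HL Hz) as [[Hb Hbl] Hla].
  unfold psil. fold L.
  destruct (Req_EM_T (L / z ^ 2) L) as [e | _]; [lra |].
  destruct (Req_EM_T (L * z ^ 2) L) as [e | _]; [lra |].
  assert (psi L < psi (L / z ^ 2)) by (apply psi_incr; lra).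
  assert (psi (L * z ^ 2) < psi L) by (apply psi_incr; lra).
  assert (psi L <> 0) by (apply psi_nz; lra).
  assert (0 < z ^ 2 < 1) by nra.
  field; repeat split; lra.
Qed.

Lemma theta_integrand_le psi psit lam z :
  twice_diff_pos psi -> twice_diff_pos psit ->
  (forall x y, 0 < x -> x < y -> psi x < psi y) ->
  (forall x y, 0 < x -> x < y -> psit x < psit y) ->
  (forall x, 0 < x -> psi x <> 0) ->
  (forall x, 0 < x -> psit x <> 0) ->
  (forall xi, 0 < xi -> 0 < Derive psi xi) ->
  (forall xi, 0 < xi -> 0 < Derive psit xi) ->
  (forall xi, 0 < xi ->
     - Derive (Derive psi) xi / Derive psi xi <=
     - Derive (Derive psit) xi / Derive psit xi) ->
  0 < lam -> 0 < z < 1 ->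
  theta_integrand psi lam z <= theta_integrand psit lam z.
Proof.
  intros Dpsi Dpsit psi_incr psit_incr psi_nz psit_nz psi'_pos psit'_pos
    log_derive_le Hlam Hz.
  unfold theta_integrand.
  rewrite (psil_quotient psi), (psil_quotient psit) by assumption.
  set (L := lam ^ 2).
  assert (HL : 0 < L) by (unfold L; nra).
  destruct (scaled_points_ordered L z HL Hz) as [[Hb Hbl] Hla].
  set (a := L / z ^ 2) in *. set (b := L * z ^ 2) in *.
  assert (chord := chord_ratio_le psi psit
    (fun x Hx => proj1 (Dpsi x Hx)) (fun x Hx => proj1 (Dpsit x Hx)) psi'_pos
    (derive_ratio_nonincreasing psi psit Dpsi Dpsit psi'_pos psit'_pos log_derive_le)
    b L a Hb (Rlt_le _ _ Hbl) (Rlt_le _ _ Hla)).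
  assert (psi L < psi a) by (apply psi_incr; lra).
  assert (psi b < psi L) by (apply psi_incr; lra).
  assert (psit L < psit a) by (apply psit_incr; lra).
  assert (psit b < psit L) by (apply psit_incr; lra).
  assert (ratio_pos : 0 < (psi L - psi b) / (psi a - psi L))
    by (apply Rdiv_lt_0_compat; lra).
  assert (ratio_le : (psi L - psi b) / (psi a - psi L) <=
                     (psit L - psit b) / (psit a - psit L)).
  { set (p := psi L - psi b) in *. set (q := psi a - psi L) in *.
    set (pt := psit L - psit b) in *. set (qt := psit a - psit L) in *.
    assert (0 < q) by (unfold q; lra). assert (0 < qt) by (unfold qt; lra).
    apply (Rmult_le_reg_r (q * qt)); [nra |].
    replace (p / q * (q * qt)) with (p * qt) by (field; lra).
    replace (pt / qt * (q * qt)) with (pt * q) by (field; lra).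
    exact chord. }
  assert (0 < (a - L) / (L - b)) by (apply Rdiv_lt_0_compat; lra).
  apply Rmult_le_compat_l.
  - left. apply Rinv_0_lt_compat. nra.
  - apply ln_le; [apply Rmult_lt_0_compat | apply Rmult_le_compat_l]; lra.
Qed.

Lemma RInt_gen_le_open (f g : R -> R) a b : a < b ->
  ex_RInt_gen f (at_right a) (at_left b) ->
  ex_RInt_gen g (at_right a) (at_left b) ->
  (forall x, a < x < b -> f x <= g x) ->
  RInt_gen f (at_right a) (at_left b) <= RInt_gen g (at_right a) (at_left b).
Proof.
  intros Hab Ef Eg f_le_g.
  set (m := (a + b) / 2).
  assert (near_a : at_right a (fun x => a < x < m)).
  { assert (Hd : 0 < m - a) by (unfold m; lra). exists (mkposreal _ Hd).
    intros x Hx Hax. apply Rabs_lt_between' in Hx. simpl in Hx. lra. }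
  assert (near_b : at_left b (fun x => m < x < b)).
  { assert (Hd : 0 < b - m) by (unfold m; lra). exists (mkposreal _ Hd).
    intros x Hx Hxb. apply Rabs_lt_between' in Hx. simpl in Hx. lra. }
  pose proof (Fa := Proper_StrongProper _ (at_right_proper_filter a)).
  pose proof (Fb := Proper_StrongProper _ (at_left_proper_filter b)).
  pose proof (Cf := @RInt_gen_correct R_CompleteNormedModule _ _ Fa Fb _ Ef).
  pose proof (Cg := @RInt_gen_correct R_CompleteNormedModule _ _ Fa Fb _ Eg).
  set (If := RInt_gen f (at_right a) (at_left b)) in *.
  set (Ig := RInt_gen g (at_right a) (at_left b)) in *.
  assert (ordered : filter_prod (at_right a) (at_left b)
                      (fun xy : R * R => fst xy <= snd xy)).
  { apply (Filter_prod _ _ _ _ _ near_a near_b). simpl. intros; lra. }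
  assert (dominated : filter_prod (at_right a) (at_left b)
    (fun xy : R * R => forall t, fst xy <= t <= snd xy ->
       norm (minus (g t) (g t)) <= minus (g t) (f t))).
  { apply (Filter_prod _ _ _ _ _ near_a near_b). simpl. intros x y Hx Hy t Ht.
    change (minus ?u ?v) with (u - v). rewrite Rminus_eq_0.
    unfold norm; simpl; unfold abs; simpl. rewrite Rabs_R0.
    enough (f t <= g t) by lra. apply f_le_g; lra. }
  (* [g - g] is the zero function written so that its integral is known. *)
  pose proof (RInt_gen_norm _ _ _ _ ordered dominated
    (is_RInt_gen_minus _ _ _ _ Cg Cg) (is_RInt_gen_minus _ _ _ _ Cg Cf)) as bound.
  change (minus Ig Ig) with (Ig - Ig) in bound.
  change (minus Ig If) with (Ig - If) in bound.
  rewrite Rminus_eq_0 in bound. unfold norm in bound; simpl in bound.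
  unfold abs in bound; simpl in bound. rewrite Rabs_R0 in bound.
  lra.
Qed.

Theorem proposition4p1 (psi psit : R -> R) :
  twice_diff_pos psi -> twice_diff_pos psit ->
  (forall x y, 0 < x -> x < y -> psi x < psi y) ->
  (forall x y, 0 < x -> x < y -> psit x < psit y) ->
  (forall x, 0 < x -> psi x <> 0) ->
  (forall x, 0 < x -> psit x <> 0) ->
  (forall xi, 0 < xi -> 0 < Derive psi xi) ->
  (forall xi, 0 < xi -> 0 < Derive psit xi) ->
  (forall xi, 0 < xi ->
     - Derive (Derive psi) xi / Derive psi xi <=
     - Derive (Derive psit) xi / Derive psit xi) ->
  forall lam, 0 < lam ->
  ex_RInt_gen (theta_integrand psi lam) (at_right 0) (at_left 1) ->
  ex_RInt_gen (theta_integrand psit lam) (at_right 0) (at_left 1) ->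
  vartheta psi lam <= vartheta psit lam.
Proof.
  intros Dpsi Dpsit psi_incr psit_incr psi_nz psit_nz psi'_pos psit'_pos
    log_derive_le lam Hlam Epsi Epsit.
  unfold vartheta.
  apply Rmult_le_compat_l; [left; apply Rinv_0_lt_compat, PI_RGT_0 |].
  apply RInt_gen_le_open; [lra | assumption | assumption |].
  intros z Hz. apply theta_integrand_le; assumption.
Qed.
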